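(* Let $\varphi$ be a finite conjunction of literals of the two forms $x\in y$ and $x = y\setminus z$ (with $x,y,z$ set variables), with finite set of variables $\mathrm{Vars}(\varphi)$, and let $\bar n=|\mathrm{Vars}(\varphi)|$. Let $M$ be a set assignment over $\mathrm{Vars}(\varphi)$ satisfying $\varphi$; let $\bar x,\bar y\in\mathrm{Vars}(\varphi)$, let $\overline{M}$ be a set assignment over $\mathrm{Vars}(\varphi)$ satisfying $\varphi$ with $\overline{M}\bar x\neq \overline{M}\bar y$, and let $\mathfrak{t}$ be a set belonging to exactly one of $\overline{M}\bar x$, $\overline{M}\bar y$. Fix a set $\mathfrak{s}$ with $\mathrm{rk}(\mathfrak{s})>\mathrm{rk}(M)$. Define $\mathsf{V}_0=\{u\in\mathrm{Vars}(\varphi)\mid \mathfrak{t}\in\overline{M}u\}$; $\mathsf{V}_n=\{u\in\mathrm{Vars}(\varphi)\mid Mu\cap\{Mw\mid w\in\mathsf{V}_{n-1}\}\neq\emptyset\}$ for $n\ge1$; $M_0v=Mv\cup\{\mathfrak{s}\}$ if $v\in\mathsf{V}_0$ and $M_0v=Mv$ otherwise; for $n\ge1$, $M_nv=M_{n-1}v\cup\{M_{n-1}u\mid u\in\mathsf{V}_{n-1},\ Mu\in Mv\}$ if $v\in\mathsf{V}_n$ and $M_nv=M_{n-1}v$ otherwise. Then $M_{\bar n}\bar x\neq M_{\bar n}\bar y$.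
   Context: A set assignment is a map from a finite set of set variables into the von Neumann universe $\mathcal{V}=\bigcup_\alpha\mathcal{V}_\alpha$, $\mathcal{V}_\alpha=\bigcup_{\beta<\alpha}\mathcal{P}(\mathcal{V}_\beta)$; it satisfies $x\in y$ iff $Mx\in My$ and $x=y\setminus z$ iff $Mx=My\setminus Mz$. The rank $\mathrm{rk}(s)$ of a set $s$ is the least ordinal $\alpha$ with $s\subseteq\mathcal{V}_\alpha$, and $\mathrm{rk}(M)=\max\{\mathrm{rk}(Mx)\mid x\in\mathrm{dom}(M)\}$. *)

From mathcomp Require Import all_boot.
From Stdlib Require Import ClassicalEpsilon.
Set Implicit Arguments. Unset Strict Implicit. Unset Printing Implicit Defensive.

(* Sets as well-founded trees (Aczel/Werner model of the cumulative hierarchy). *)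
Inductive V : Type := sup (A : Type) (f : A -> V).

Definition idx (x : V) : Type := match x with sup A _ => A end.
Definition elem (x : V) : idx x -> V := match x with sup _ f => f end.

Fixpoint Veq (x y : V) {struct x} : Prop :=
  match x, y with
  | sup A f, sup B g =>
      (forall a, exists b, Veq (f a) (g b)) /\ (forall b, exists a, Veq (f a) (g b))
  end.

Definition Vin (x y : V) : Prop := exists b : idx y, Veq x (elem b).

Definition Vdiff (y z : V) : V :=
  sup (fun p : {b : idx y | ~ Vin (elem b) z} => elem (proj1_sig p)).

Definition Vunion (x y : V) : V :=
  sup (fun p : idx x + idx y =>
         match p with inl a => elem a | inr b => elem b end).

Definition Vsingleton (s : V) : V := sup (fun _ : unit => s).

Definition Vbigunion (I : Type) (F : I -> V) : V :=
  sup (fun p : {i : I & idx (F i)} => elem (projT2 p)).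

Definition Vsucc (x : V) : V := Vunion x (Vsingleton x).

Fixpoint Vrank (x : V) : V :=
  match x with sup A f => Vbigunion (fun a : A => Vsucc (Vrank (f a))) end.

Inductive lit (X : Type) : Type :=
| LIn   : X -> X -> lit X
| LDiff : X -> X -> X -> lit X.

Definition lit_vars (X : Type) (l : lit X) : seq X :=
  match l with LIn x y => [:: x; y] | LDiff x y z => [:: x; y; z] end.

Definition sat_lit (X : Type) (M : X -> V) (l : lit X) : Prop :=
  match l with
  | LIn x y => Vin (M x) (M y)
  | LDiff x y z => Veq (M x) (Vdiff (M y) (M z))
  end.

Definition sat (X : Type) (M : X -> V) (phi : seq (lit X)) : Prop :=
  forall l, List.In l phi -> sat_lit M l.

(* rk(M) = max of ranks = union of the ordinals rk(M v) *)
Definition rank_assign (X : Type) (M : X -> V) : V :=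
  Vbigunion (fun v : X => Vrank (M v)).

Fixpoint Vset (X : Type) (M Mbar : X -> V) (t : V) (n : nat) (u : X) : Prop :=
  match n with
  | 0 => Vin t (Mbar u)
  | n'.+1 => exists w, Vset M Mbar t n' w /\ Vin (M w) (M u)
  end.

Fixpoint Mn (X : Type) (M Mbar : X -> V) (t s : V) (n : nat) (v : X) : V :=
  match n with
  | 0 => if excluded_middle_informative (Vset M Mbar t 0 v)
         then Vunion (M v) (Vsingleton s) else M v
  | n'.+1 =>
      if excluded_middle_informative (Vset M Mbar t n'.+1 v)
      then Vunion (Mn M Mbar t s n' v)
             (sup (fun p : {u : X | Vset M Mbar t n' u /\ Vin (M u) (M v)} =>
                     Mn M Mbar t s n' (proj1_sig p)))
      else Mn M Mbar t s n' v
  end.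

From Pilot Require Import Defs.
From mathcomp Require Import all_boot.
From Stdlib Require Import Relations Wellfounded ClassicalEpsilon.
Set Implicit Arguments. Unset Strict Implicit. Unset Printing Implicit Defensive.

(* Every set added along the construction to [M_k u], for [u] in [V_k], contains
   [s] hereditarily: [s] is in the transitive closure of [M_k u].  By the choice
   of [t], one of [xb], [yb] lies in [V_0] and the other does not; call them [x]
   and [y].  Then [s] belongs to [M_n x] but not to [M_n y]: it is not in [M y]
   since its rank exceeds [rk(M)], it is not added directly since [y] is not in
   [V_0], and it is not one of the added [M_k u], since [s] would then
   hereditarily contain itself, against foundation. *)

Lemma Veq_refl x : Veq x x.
Proof. by elim: x => A f IH /=; split=> a; exists a. Qed.

Lemma Veq_sym x y : Veq x y -> Veq y x.
Proof.
elim: x y => A f IH [B g] /= [fg gf]; split=> [b|a].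
- by have [a /IH] := gf b; exists a.
- by have [b /IH] := fg a; exists b.
Qed.

Lemma Veq_trans x y z : Veq x y -> Veq y z -> Veq x z.
Proof.
elim: x y z => A f IH [B g] [C h] /= [fg gf] [gh hg]; split=> [a|c].
- have [b fgab] := fg a; have [c ghbc] := gh b.
  by exists c; apply: IH fgab ghbc.
- have [b ghbc] := hg c; have [a fgab] := gf b.
  by exists a; apply: IH fgab ghbc.
Qed.

Lemma Vin_Veq_r x y y' : Veq y y' -> Vin x y -> Vin x y'.
Proof.
case: y y' => [B g] [C h] [gh _] [b xb].
by have [c bc] := gh b; exists c; apply: Veq_trans xb bc.
Qed.

Lemma Vext x y :
  (forall z, Vin z x -> Vin z y) -> (forall z, Vin z y -> Vin z x) -> Veq x y.
Proof.
case: x y => [A f] [B g] xy yx /=; split=> [a|b].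
- have [b ab] : Vin (f a) (Defs.sup g) by apply: xy; exists a; apply: Veq_refl.
  by exists b.
- have [a ba] : Vin (g b) (Defs.sup f) by apply: yx; exists b; apply: Veq_refl.
  by exists a; apply: Veq_sym.
Qed.

Lemma Vin_union z x y : Vin z (Vunion x y) <-> Vin z x \/ Vin z y.
Proof.
split=> [[[a|b] za] | [[a za] | [b zb]]].
- by left; exists a.
- by right; exists b.
- by exists (inl a).
- by exists (inr b).
Qed.

Lemma Vin_singleton z s : Vin z (Vsingleton s) <-> Veq z s.
Proof. by split=> [[] | zs]; last exists tt. Qed.

Lemma Vin_bigunion (I : Type) (F : I -> V) z :
  Vin z (Vbigunion F) <-> exists i, Vin z (F i).
Proof.
split=> [[[i b] zb] | [i [b zb]]]; first by exists i, b.
by exists (existT _ i b).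
Qed.

Lemma Vin_rank z x : Vin z (Vrank x) <->
  exists a : idx x, Vin z (Vrank (elem a)) \/ Veq z (Vrank (elem a)).
Proof.
case: x => A f /=; rewrite Vin_bigunion.
by split=> -[a za]; exists a; move: za; rewrite Vin_union Vin_singleton.
Qed.

Lemma Vrank_Veq x y : Veq x y -> Veq (Vrank x) (Vrank y).
Proof.
elim: x y => A f IH [B g] xy; have [fg gf] := xy.
apply: Vext => z; rewrite !Vin_rank => -[a za] /=.
- have [b /IH fgab] := fg a; exists b.
  by case: za => [za|za]; [left; apply: Vin_Veq_r za | right; apply: Veq_trans za _].
- have [b /IH /Veq_sym fgba] := gf a; exists b.
  by case: za => [za|za]; [left; apply: Vin_Veq_r za | right; apply: Veq_trans za _].
Qed.

Lemma Vrank_Vin x y : Vin x y -> Vin (Vrank x) (Vrank y).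
Proof. by case=> b xb; apply/Vin_rank; exists b; right; apply: Vrank_Veq. Qed.

Lemma Acc_Veq x x' : Veq x x' -> Acc Vin x -> Acc Vin x'.
Proof.
move=> + acc; elim: acc x' => {}x _ IH x' xx'.
by constructor=> z /(Vin_Veq_r (Veq_sym xx')) /IH; apply; apply: Veq_refl.
Qed.

Lemma Vin_wf : well_founded Vin.
Proof.
elim=> A f IH; constructor=> z [a za].
exact: Acc_Veq (Veq_sym za) (IH a).
Qed.

Lemma Vin_clos_trans_irrefl x : ~ clos_trans V Vin x x.
Proof.
elim: (wf_clos_trans _ _ Vin_wf x) => {}x _ IH cyc; exact: (IH x cyc cyc).
Qed.

Lemma Vin_asym x y : Vin x y -> ~ Vin y x.
Proof.
move=> xy yx; apply: (@Vin_clos_trans_irrefl x).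
exact: t_trans (t_step _ _ _ _ xy) (t_step _ _ _ _ yx).
Qed.

Lemma clos_trans_Vin_Veq_r x y y' :
  Veq y y' -> clos_trans V Vin x y -> clos_trans V Vin x y'.
Proof.
move=> yy' xy; elim: xy y' yy' => {}x {}y.
- by move=> xy y' yy'; apply/t_step/(Vin_Veq_r yy').
- by move=> z xy _ _ IH y' zy'; apply: t_trans xy (IH _ zy').
Qed.

Section Construction.

Variables (X : Type) (M Mbar : X -> V) (t s : V).

Lemma Vin_Mn_cases n v z : Vin z (Mn M Mbar t s n v) ->
  [\/ Vin z (M v), Vset M Mbar t 0 v /\ Veq z s
    | exists k u, Vset M Mbar t k u /\ Veq z (Mn M Mbar t s k u)].
Proof.
elim: n v => [|n IH] v /=.
- case: (excluded_middle_informative _) => /= [V0v|_]; last by move=> ?; apply: Or31.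
  by case/Vin_union=> [zv | /Vin_singleton zs]; [apply: Or31 | apply: Or32].
- case: (excluded_middle_informative _) => /= [_|_]; last exact: IH.
  case/Vin_union=> [/IH // | [[u [Vu ?]] zu]].
  by apply: Or33; exists n, u.
Qed.

Lemma s_in_Mn n v : Vset M Mbar t 0 v -> Vin s (Mn M Mbar t s n v).
Proof.
move=> V0v; elim: n => [|n IH] /=.
- case: (excluded_middle_informative _) => /= // _.
  by apply/Vin_union; right; apply/Vin_singleton/Veq_refl.
- by case: (excluded_middle_informative _) => /= // _; apply/Vin_union; left.
Qed.

Lemma s_clos_trans_Mn k u : Vset M Mbar t k u -> clos_trans V Vin s (Mn M Mbar t s k u).
Proof.
elim: k u => [|k IH] u Vu; first exact/t_step/s_in_Mn.
have [w [Vw wu]] := Vu; rewrite /=.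
case: (excluded_middle_informative _) => /= // _.
apply: t_trans (IH w Vw) (t_step _ _ _ _ _); apply/Vin_union; right.
by exists (exist _ w (conj Vw wu)); apply: Veq_refl.
Qed.

Hypothesis rank_M_in_rank_s : Vin (rank_assign M) (Vrank s).

Lemma s_notin_M v : ~ Vin s (M v).
Proof.
move=> /Vrank_Vin rks; apply: Vin_asym rank_M_in_rank_s _.
by apply/Vin_bigunion; exists v.
Qed.

Lemma Mn_V0_neq n x y :
  Vset M Mbar t 0 x -> ~ Vset M Mbar t 0 y ->
  ~ Veq (Mn M Mbar t s n x) (Mn M Mbar t s n y).
Proof.
move=> V0x nV0y xy.
case: (Vin_Mn_cases (Vin_Veq_r xy (s_in_Mn n V0x))) => [sMy | [V0y _] | [k [u [Vu su]]]].
- exact: s_notin_M sMy.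
- exact: nV0y V0y.
- exact: Vin_clos_trans_irrefl (clos_trans_Vin_Veq_r (Veq_sym su) (s_clos_trans_Mn Vu)).
Qed.

End Construction.

Theorem lemma11 (X : finType) (phi : seq (lit X))
  (Hvars : forall v : X, exists2 l, List.In l phi & v \in lit_vars l)
  (M Mbar : X -> V) (xb yb : X) (t s : V)
  (HM : sat M phi) (HMbar : sat Mbar phi)
  (Hneq : ~ Veq (Mbar xb) (Mbar yb))
  (Ht : (Vin t (Mbar xb) /\ ~ Vin t (Mbar yb)) \/ (Vin t (Mbar yb) /\ ~ Vin t (Mbar xb)))
  (Hs : Vin (rank_assign M) (Vrank s)) :
  ~ Veq (Mn M Mbar t s #|X| xb) (Mn M Mbar t s #|X| yb).
Proof.
case: Ht => [[txb tyb] | [tyb txb]]; first exact: Mn_V0_neq.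
by move/Veq_sym; apply: Mn_V0_neq.
Qed.
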